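(* Let $\nu>2$ and let $F_\nu$ be the CDF of the Student's $t$-distribution with $\nu$ degrees of freedom, location $0$ and scale $1$. For every $t>0$, $$\frac{1}{1-F_\nu(t)}\le\frac{(t^2+\nu)^{\nu/2}}{\kappa},\qquad \kappa=\frac{\Gamma\left(\frac{\nu+1}{2}\right)(\nu-1)}{2\sqrt{\pi}\,\Gamma\left(\frac{\nu}{2}\right)}.$$ *)

From Stdlib Require Import Reals.
From Coquelicot Require Import Coquelicot.
Open Scope R_scope.

Definition Gamma (s : R) : R :=
  RInt_gen (fun x => Rpower x (s - 1) * exp (- x))
           (at_right 0) (Rbar_locally p_infty).

Definition student_t_pdf (nu x : R) : R :=
  Gamma ((nu + 1) / 2) / (sqrt (nu * PI) * Gamma (nu / 2))
  * Rpower (1 + x ^ 2 / nu) (- ((nu + 1) / 2)).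

Definition student_t_cdf (nu t : R) : R :=
  RInt_gen (student_t_pdf nu) (Rbar_locally m_infty) (at_point t).

From Stdlib Require Import Reals Lra Classical.
From Coquelicot Require Import Coquelicot.
Open Scope R_scope.

(* Write the density as [c * k x] with [k x = (1 + x^2/nu) ^ (-(nu+1)/2)] and
   [c = Gamma ((nu+1)/2) / (sqrt (nu PI) Gamma (nu/2))].
   - The mass of [c * k] on any interval is at most 1: with [s = (nu+1)/2],
     [Gamma s * k x = int_0^oo y^(s-1) exp (-(1 + x^2/nu) y) dy]; after exchanging the two
     integrals the inner x-integral is Gaussian, at most [sqrt (nu PI / y)], which leaves
     [sqrt (nu PI) Gamma (nu/2)].  Hence [F t + int_t^M c k <= 1].
   - For [x >= 0], [k x >= k x * x / sqrt (x^2 + nu)], the derivative of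
     [- nu^((nu-1)/2) (x^2 + nu)^(-nu/2)]; letting [M -> oo] gives
     [1 - F t >= c nu^((nu-1)/2) (t^2 + nu)^(-nu/2)].
   - Finally [kappa <= c nu^((nu-1)/2)] reduces to [(nu-1)/2 <= nu^(nu/2-1)].
   [Gamma] and [F] are [RInt_gen] values, which are junk unless the improper integrals converge;
   in both cases convergence comes from monotone bounded partial integrals. *)

(** * Integrals of continuous functions *)

Lemma ball_R_iff (x e y : R) : ball x e y <-> x - e < y < x + e.
Proof.
split; intros H; [apply Rabs_def2 in H | apply Rabs_def1];
  unfold minus, plus, opp in *; simpl in *; lra.
Qed.

Lemma continuous_of_ex_derive (f : R -> R) x : ex_derive f x -> continuous f x.
Proof. exact (ex_derive_continuous f x). Qed.

Lemma ex_RInt_cont (f : R -> R) a b : (forall x, continuous f x) -> ex_RInt f a b.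
Proof. intros Hf; apply (ex_RInt_continuous (V := R_CompleteNormedModule)); intros; apply Hf. Qed.

Lemma RInt_mult_l (f : R -> R) k a b : (forall x, continuous f x) ->
  RInt (fun x => k * f x) a b = k * RInt f a b.
Proof.
intros Hf; exact (RInt_scal (V := R_CompleteNormedModule) f a b k (ex_RInt_cont f a b Hf)).
Qed.

Lemma RInt_Chasles_cont (f : R -> R) a b c : (forall x, continuous f x) ->
  RInt f a b + RInt f b c = RInt f a c.
Proof. intros Hf; apply (RInt_Chasles (V := R_CompleteNormedModule)); now apply ex_RInt_cont. Qed.

Lemma RInt_le_cont (f g : R -> R) a b : a <= b ->
  (forall x, continuous f x) -> (forall x, continuous g x) ->
  (forall x, a <= x <= b -> f x <= g x) -> RInt f a b <= RInt g a b.
Proof.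
intros Hab Hf Hg Hfg; apply RInt_le; try apply ex_RInt_cont; auto.
intros x Hx; apply Hfg; lra.
Qed.

Lemma RInt_ge0_cont (f : R -> R) a b : a <= b -> (forall x, continuous f x) ->
  (forall x, a <= x <= b -> 0 <= f x) -> 0 <= RInt f a b.
Proof.
intros Hab Hf Hf0; apply RInt_ge_0; [exact Hab | now apply ex_RInt_cont |].
intros x Hx; apply Hf0; lra.
Qed.

Lemma RInt_subinterval_le (f : R -> R) a a' b' b : a <= a' -> a' <= b' -> b' <= b ->
  (forall x, continuous f x) -> (forall x, a <= x <= b -> 0 <= f x) ->
  RInt f a' b' <= RInt f a b.
Proof.
intros Ha Hab Hb Hf Hf0.
rewrite <- (RInt_Chasles_cont f a a' b), <- (RInt_Chasles_cont f a' b' b) by exact Hf.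
assert (0 <= RInt f a a') by (apply RInt_ge0_cont; auto; intros; apply Hf0; lra).
assert (0 <= RInt f b' b) by (apply RInt_ge0_cont; auto; intros; apply Hf0; lra).
lra.
Qed.

Lemma RInt_incr_cont (f : R -> R) c a b : a <= b -> (forall x, continuous f x) ->
  (forall x, 0 <= f x) -> RInt f c a <= RInt f c b.
Proof.
intros Hab Hf Hf0; rewrite <- (RInt_Chasles_cont f c a b) by exact Hf.
assert (0 <= RInt f a b) by (apply RInt_ge0_cont; auto). lra.
Qed.

Lemma RInt_scale (f : R -> R) k a b : (forall x, continuous f x) ->
  RInt (fun y => k * f (k * y)) a b = RInt f (k * a) (k * b).
Proof.
intros Hf; rewrite <- (Rplus_0_r (k * a)), <- (Rplus_0_r (k * b)).
rewrite <- (RInt_comp_lin (V := R_CompleteNormedModule)) by apply ex_RInt_cont, Hf.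
apply RInt_ext; intros y _; now rewrite Rplus_0_r.
Qed.

Lemma is_derive_RInt_cont (f : R -> R) c x : (forall x, continuous f x) ->
  is_derive (fun y => RInt f c y) x (f x).
Proof.
intros Hf; apply is_derive_RInt with c; [| apply Hf].
apply filter_forall; intros y; apply RInt_correct, ex_RInt_cont, Hf.
Qed.

Lemma is_derive_0_const (f : R -> R) a b : (forall x, is_derive f x 0) -> f a = f b.
Proof.
intros Hf; destruct (Rtotal_order a b) as [Hab | [-> | Hab]]; [| reflexivity |].
- apply eq_is_derive; [intros; apply Hf | exact Hab].
- symmetry; apply eq_is_derive; [intros; apply Hf | exact Hab].
Qed.

Lemma filterlim_incr_bounded (f : R -> R) M :
  (forall x y, x <= y -> f x <= f y) -> (forall x, f x <= M) ->
  exists l, filterlim f (Rbar_locally p_infty) (locally l).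
Proof.
intros Hincr HM.
destruct (completeness (fun r => exists x, r = f x)) as [l [Hub Hlub]].
- exists M; intros r [x ->]; apply HM.
- exists (f 0), 0; reflexivity.
- exists l; apply filterlim_locally; intros eps.
  destruct (classic (exists x, l - eps < f x)) as [[x0 Hx0] | Hnone].
  + exists x0; intros x Hx; apply ball_R_iff.
    specialize (Hincr x0 x (Rlt_le _ _ Hx)); assert (f x <= l) by (apply Hub; now exists x).
    lra.
  + assert (l <= l - eps); [| pose proof (cond_pos eps); lra].
    apply Hlub; intros r [x ->]; apply Rnot_lt_le; intros Hx; apply Hnone; now exists x.
Qed.

Lemma filterlim_incr_bounded_m_infty (f : R -> R) m :
  (forall x y, x <= y -> f x <= f y) -> (forall x, m <= f x) ->
  exists l, filterlim f (Rbar_locally m_infty) (locally l).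
Proof.
intros Hincr Hm.
destruct (filterlim_incr_bounded (fun x => - f (- x)) (- m)) as [l Hl].
- intros x y Hxy; specialize (Hincr (- y) (- x)); lra.
- intros x; specialize (Hm (- x)); lra.
- exists (- l).
  apply (filterlim_ext (fun x => - (- f (- - x)))); [intros x; now rewrite !Ropp_involutive |].
  apply (filterlim_comp _ _ _ Ropp (fun y => - (- f (- y))) _ (Rbar_locally p_infty)).
  + apply (filterlim_Rbar_opp m_infty).
  + apply (filterlim_comp _ _ _ (fun y => - f (- y)) Ropp _ (locally l)); [exact Hl |].
    apply (filterlim_opp l).
Qed.

Lemma is_RInt_gen_primitive (f : R -> R) c Fa Fb {FFa : Filter Fa} {FFb : Filter Fb} la lb :
  (forall x, continuous f x) ->
  filterlim (fun x => RInt f c x) Fa (locally la) ->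
  filterlim (fun x => RInt f c x) Fb (locally lb) ->
  is_RInt_gen f Fa Fb (lb - la).
Proof.
intros Hf Ha Hb.
assert (HD : forall x, Derive (fun y => RInt f c y) x = f x)
  by (intros x; apply is_derive_unique, is_derive_RInt_cont, Hf).
apply (is_RInt_gen_ext (Derive (fun y => RInt f c y))).
- apply filter_forall; intros ab x _; apply HD.
- apply is_RInt_gen_Derive; auto; apply filter_forall; intros ab x _.
  + eexists; apply is_derive_RInt_cont, Hf.
  + apply (continuous_ext f); [intros; now rewrite HD | apply Hf].
Qed.

(** * Integrals depending on a parameter *)

Lemma continuity_2d_pt_swap (h : R -> R -> R) x y :
  continuity_2d_pt h x y -> continuity_2d_pt (fun u v => h v u) y x.
Proof. intros Hh eps; destruct (Hh eps) as [d Hd]; exists d; intros u v Hu Hv; now apply Hd. Qed.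

Lemma continuity_2d_pt_continuous_snd (h : R -> R -> R) x y :
  continuity_2d_pt h x y -> continuous (fun v => h x v) y.
Proof.
intros Hh; apply filterlim_locally; intros eps; destruct (Hh eps) as [d Hd].
exists d; intros v Hv; apply Hd; [rewrite Rminus_eq_0, Rabs_R0; apply cond_pos | exact Hv].
Qed.

Lemma continuity_2d_pt_of_snd (f : R -> R) x y :
  continuous f y -> continuity_2d_pt (fun _ v => f v) x y.
Proof.
intros Hf eps; destruct (proj1 (filterlim_locally f (f y)) Hf eps) as [d Hd].
exists d; intros u v _ Hv; exact (Hd v Hv).
Qed.

Lemma continuity_2d_pt_of_fst (f : R -> R) x y :
  continuous f x -> continuity_2d_pt (fun u _ => f u) x y.
Proof. intros Hf; exact (continuity_2d_pt_swap _ y x (continuity_2d_pt_of_snd f y x Hf)). Qed.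

Lemma continuity_2d_pt_mult_sep (f g : R -> R) x y : continuous f x -> continuous g y ->
  continuity_2d_pt (fun u v => f u * g v) x y.
Proof.
intros Hf Hg; apply continuity_2d_pt_mult;
  [apply continuity_2d_pt_of_fst | apply continuity_2d_pt_of_snd]; assumption.
Qed.

Section ParametricIntegral.

Variable h : R -> R -> R.
Hypothesis h_cont : forall x y, continuity_2d_pt h x y.

Let h_cont_snd x y : continuous (fun v => h x v) y.
Proof. apply continuity_2d_pt_continuous_snd, h_cont. Qed.

Let continuous_RInt_param_le c d x0 : c <= d ->
  continuous (fun x => RInt (fun y => h x y) c d) x0.
Proof.
intros Hcd; apply filterlim_locally; intros eps.
assert (He : 0 < eps / (d - c + 1)) by (apply Rdiv_lt_0_compat; [apply cond_pos | lra]).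
destruct (uniform_continuity_2d_1d (fun y x => h x y) c d x0) with (eps := mkposreal _ He)
  as [del Hdel].
{ intros y _; apply continuity_2d_pt_swap, h_cont. }
exists del; intros u Hu; apply ball_R_iff in Hu.
change (Rabs (RInt (fun y => h u y) c d - RInt (fun y => h x0 y) c d) < eps).
rewrite <- (RInt_minus (V := R_CompleteNormedModule)) by apply ex_RInt_cont, h_cont_snd.
eapply Rle_lt_trans.
- apply abs_RInt_le_const; [exact Hcd | apply ex_RInt_cont; intros y;
    apply (continuous_minus (V := R_NormedModule)); apply h_cont_snd |].
  intros y Hy; left; apply (Hdel y x0 y u); try lra.
  rewrite Rminus_eq_0, Rabs_R0; apply cond_pos.
- assert (E : (d - c) * (eps / (d - c + 1)) = eps - eps / (d - c + 1)) by (field; lra).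
  simpl; rewrite E; lra.
Qed.

Lemma continuous_RInt_param c d x0 : continuous (fun x => RInt (fun y => h x y) c d) x0.
Proof.
destruct (Rle_lt_dec c d) as [Hcd | Hdc]; [now apply continuous_RInt_param_le |].
apply (continuous_ext (fun x => - RInt (fun y => h x y) d c)).
- intros x; apply (opp_RInt_swap (V := R_CompleteNormedModule)), ex_RInt_cont, h_cont_snd.
- apply (continuous_opp (V := R_NormedModule)), continuous_RInt_param_le; lra.
Qed.

End ParametricIntegral.

Lemma RInt_exchange (h : R -> R -> R) a b c d :
  (forall x y, continuity_2d_pt h x y) ->
  RInt (fun x => RInt (fun y => h x y) c d) a b =
  RInt (fun y => RInt (fun x => h x y) a b) c d.
Proof.
intros h_cont.
assert (h'_cont : forall x y, continuity_2d_pt (fun u v => h v u) x y)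
  by (intros; apply continuity_2d_pt_swap, h_cont).
assert (h_cont_snd : forall x y, continuous (fun v => h x v) y)
  by (intros; apply continuity_2d_pt_continuous_snd, h_cont).
assert (HD : forall x u, Derive (fun z => RInt (fun y => h x y) c z) u = h x u)
  by (intros; apply is_derive_unique, is_derive_RInt_cont, h_cont_snd).
set (D := fun u => RInt (fun x => RInt (fun y => h x y) c u) a b
                   - RInt (fun y => RInt (fun x => h x y) a b) c u).
assert (HD' : forall u, is_derive D u 0).
{ intros u; replace 0 with (RInt (fun x => h x u) a b - RInt (fun x => h x u) a b) by ring.
  apply (is_derive_minus (K := R_AbsRing) (V := R_NormedModule)).
  - rewrite (RInt_ext (fun x => h x u) (fun x => Derive (fun z => RInt (fun y => h x y) c z) u))
      by (intros x _; symmetry; apply HD).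
    apply (is_derive_RInt_param (fun z x => RInt (fun y => h x y) c z) a b u).
    + apply filter_forall; intros z x _; eexists; apply is_derive_RInt_cont, h_cont_snd.
    + intros x _; apply (continuity_2d_pt_ext (fun z v => h v z)); [intros; now rewrite HD |].
      apply h'_cont.
    + apply filter_forall; intros z; apply ex_RInt_cont; intros x.
      apply continuous_RInt_param, h_cont.
  - apply (is_derive_RInt_cont (fun y => RInt (fun x => h x y) a b)); intros y.
    apply (continuous_RInt_param (fun y x => h x y)), h'_cont. }
assert (HDc : D c = 0).
{ unfold D; rewrite RInt_point, (RInt_ext _ (fun _ => 0)), RInt_const.
  - change (scal (b - a) 0 - 0 = 0); unfold scal; simpl; unfold mult; simpl; ring.
  - intros x _; apply (RInt_point (V := R_CompleteNormedModule)). }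
pose proof (is_derive_0_const D d c HD') as HDd; rewrite HDc in HDd; unfold D in HDd; lra.
Qed.

(** * The Gaussian integral *)

Definition gauss_primitive (x : R) : R := RInt (fun u => exp (- u ^ 2)) 0 x.

Definition gauss_aux (x : R) : R :=
  RInt (fun t => exp (- x ^ 2 * (1 + t ^ 2)) / (1 + t ^ 2)) 0 1.

Lemma continuous_gauss x : continuous (fun u => exp (- u ^ 2)) x.
Proof. apply continuous_of_ex_derive; auto_derive; auto. Qed.

Lemma is_derive_gauss_primitive x : is_derive gauss_primitive x (exp (- x ^ 2)).
Proof. apply (is_derive_RInt_cont (fun u => exp (- u ^ 2))), continuous_gauss. Qed.

Lemma is_derive_gauss_aux x : is_derive gauss_aux x (- 2 * exp (- x ^ 2) * gauss_primitive x).
Proof.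
assert (HD : forall u t, Derive (fun z => exp (- z ^ 2 * (1 + t ^ 2)) / (1 + t ^ 2)) u
                         = - 2 * u * exp (- u ^ 2 * (1 + t ^ 2))).
{ intros u t; apply is_derive_unique; auto_derive; [easy | simpl; field; nra]. }
replace (- 2 * exp (- x ^ 2) * gauss_primitive x)
  with (RInt (fun t => Derive (fun z => exp (- z ^ 2 * (1 + t ^ 2)) / (1 + t ^ 2)) x) 0 1).
- apply (is_derive_RInt_param (fun z t => exp (- z ^ 2 * (1 + t ^ 2)) / (1 + t ^ 2)) 0 1 x).
  + apply filter_forall; intros z t _; auto_derive; easy.
  + intros t _; apply (continuity_2d_pt_ext (fun u v => (- 2 * u) * exp (- u ^ 2 * (1 + v ^ 2)))).
    { intros; now rewrite HD. }
    apply continuity_2d_pt_mult.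
    * apply continuity_2d_pt_of_fst, continuous_of_ex_derive; auto_derive; auto.
    * apply (continuity_1d_2d_pt_comp exp (fun u v => - u ^ 2 * (1 + v ^ 2))).
      { apply derivable_continuous_pt, derivable_pt_exp. }
      apply continuity_2d_pt_mult_sep; apply continuous_of_ex_derive; auto_derive; auto.
  + apply filter_forall; intros z; apply ex_RInt_cont; intros t.
    apply continuous_of_ex_derive; auto_derive; nra.
- rewrite (RInt_ext _ (fun t => (- 2 * exp (- x ^ 2)) * (x * exp (- (x * t) ^ 2)))).
  + rewrite RInt_mult_l by (intros; apply continuous_of_ex_derive; auto_derive; auto).
    unfold gauss_primitive; rewrite (RInt_scale (fun u => exp (- u ^ 2))) by apply continuous_gauss.
    now rewrite Rmult_0_r, Rmult_1_r.
  + intros t _; rewrite HD; replace (- x ^ 2 * (1 + t ^ 2)) with (- x ^ 2 + - (x * t) ^ 2) by ring.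
    rewrite exp_plus; simpl; ring.
Qed.

Lemma gauss_primitive_sqr_add x : gauss_primitive x ^ 2 + gauss_aux x = PI / 4.
Proof.
assert (Hconst : forall x, is_derive (fun x => gauss_primitive x ^ 2 + gauss_aux x) x 0).
{ intros y; replace 0 with (INR 2 * exp (- y ^ 2) * gauss_primitive y ^ 1
                            + - 2 * exp (- y ^ 2) * gauss_primitive y) by (simpl; ring).
  apply (is_derive_plus (K := R_AbsRing) (V := R_NormedModule)).
  - apply (is_derive_pow gauss_primitive 2 y), is_derive_gauss_primitive.
  - apply is_derive_gauss_aux. }
rewrite (is_derive_0_const _ x 0 Hconst); unfold gauss_primitive, gauss_aux.
rewrite RInt_point, (RInt_ext _ (fun t => / (1 + t ^ 2))).
- rewrite (is_RInt_unique _ 0 1 (atan 1 - atan 0)), atan_1, atan_0; [unfold zero; simpl; ring |].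
  apply (is_RInt_derive (V := R_CompleteNormedModule) atan); intros t _.
  + apply is_derive_Reals, derivable_pt_lim_atan.
  + apply continuous_of_ex_derive; auto_derive; nra.
- intros t _; replace (- 0 ^ 2 * (1 + t ^ 2)) with 0 by ring; rewrite exp_0; simpl; field; nra.
Qed.

Lemma gauss_aux_ge0 x : 0 <= gauss_aux x.
Proof.
apply RInt_ge0_cont; [lra | |].
- intros t; apply continuous_of_ex_derive; auto_derive; nra.
- intros t _; apply Rlt_le, Rdiv_lt_0_compat; [apply exp_pos | nra].
Qed.

Lemma Rabs_gauss_primitive_le x : Rabs (gauss_primitive x) <= sqrt PI / 2.
Proof.
pose proof (gauss_primitive_sqr_add x); pose proof (gauss_aux_ge0 x).
rewrite <- (sqrt_pow2 (sqrt PI / 2)) by (pose proof (sqrt_pos PI); lra).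
rewrite <- sqrt_Rsqr_abs; apply sqrt_le_1_alt.
unfold Rsqr, Rdiv; rewrite Rpow_mult_distr, pow2_sqrt by (pose proof PI_RGT_0; lra).
simpl in *; lra.
Qed.

Lemma RInt_gauss_le a b : RInt (fun u => exp (- u ^ 2)) a b <= sqrt PI.
Proof.
rewrite <- (RInt_Chasles_cont _ a 0 b) by apply continuous_gauss.
rewrite <- (opp_RInt_swap (V := R_CompleteNormedModule)) by apply ex_RInt_cont, continuous_gauss.
change (- gauss_primitive a + gauss_primitive b <= sqrt PI).
pose proof (Rabs_gauss_primitive_le a); pose proof (Rabs_gauss_primitive_le b).
pose proof (Rle_abs (gauss_primitive b)); pose proof (Rle_abs (- gauss_primitive a)).
rewrite Rabs_Ropp in *; lra.
Qed.

Lemma RInt_gauss_scaled_le r a b : 0 < r ->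
  RInt (fun u => exp (- (r * u) ^ 2)) a b <= sqrt PI / r.
Proof.
intros Hr.
assert (E : RInt (fun u => exp (- (r * u) ^ 2)) a b
            = / r * RInt (fun u => exp (- u ^ 2)) (r * a) (r * b)).
{ rewrite <- RInt_scale, <- RInt_mult_l
    by (intros; apply continuous_of_ex_derive; auto_derive; auto).
  apply RInt_ext; intros u _; simpl; field; lra. }
rewrite E, Rmult_comm; apply Rmult_le_compat_r; [apply Rlt_le, Rinv_0_lt_compat, Hr |].
apply RInt_gauss_le.
Qed.

(** * Powers and the Gamma function *)

Lemma exp_le_exp x y : x <= y -> exp x <= exp y.
Proof. intros [Hxy | ->]; [apply Rlt_le, exp_increasing, Hxy | apply Rle_refl]. Qed.

Lemma continuous_Rpower x p : 0 < x -> continuous (fun x => Rpower x p) x.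
Proof.
intros Hx; apply continuous_of_ex_derive; eexists.
apply is_derive_Reals, derivable_pt_lim_power, Hx.
Qed.

(* [Rpower x y = exp (y * ln x)] is 1 for [x <= 0]; [Rpower0] extends [x ^ y] by 0 there,
   continuously when [0 < y]. *)
Definition Rpower0 (x y : R) : R := if Rle_dec x 0 then 0 else Rpower x y.

Lemma Rpower0_pos x y : 0 < x -> Rpower0 x y = Rpower x y.
Proof. intros Hx; unfold Rpower0; destruct (Rle_dec x 0); [lra | reflexivity]. Qed.

Lemma Rpower0_nonpos x y : x <= 0 -> Rpower0 x y = 0.
Proof. intros Hx; unfold Rpower0; destruct (Rle_dec x 0); [reflexivity | lra]. Qed.

Lemma Rpower0_ge0 x y : 0 <= Rpower0 x y.
Proof. unfold Rpower0; destruct (Rle_dec x 0); [lra | apply Rlt_le, exp_pos]. Qed.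

Lemma continuous_Rpower0 x y : 0 < y -> continuous (fun x => Rpower0 x y) x.
Proof.
intros Hy; destruct (Rtotal_order x 0) as [Hx | [-> | Hx]].
- apply (continuous_ext_loc _ (fun _ => 0)); [| apply continuous_const].
  assert (Hd : 0 < - x) by lra; exists (mkposreal _ Hd); intros z Hz.
  apply ball_R_iff in Hz; simpl in Hz; rewrite Rpower0_nonpos; lra.
- apply filterlim_locally; intros eps.
  exists (mkposreal _ (exp_pos (ln eps / y))); intros z Hz; apply ball_R_iff.
  apply ball_R_iff in Hz; simpl in Hz.
  rewrite (Rpower0_nonpos 0) by lra.
  destruct (Rle_dec z 0) as [Hz0 | Hz0].
  + rewrite Rpower0_nonpos by exact Hz0; pose proof (cond_pos eps); lra.
  + apply Rnot_le_lt in Hz0; rewrite Rpower0_pos by exact Hz0; unfold Rpower.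
    split; [pose proof (exp_pos (y * ln z)); pose proof (cond_pos eps); lra |].
    rewrite Rplus_0_l, <- (exp_ln eps) by apply cond_pos; apply exp_increasing.
    assert (Hln : ln z < ln eps / y)
      by (rewrite <- (ln_exp (ln eps / y)); apply ln_increasing; lra).
    apply (Rmult_lt_compat_l y) in Hln; [| exact Hy].
    replace (y * (ln eps / y)) with (ln eps) in Hln by (field; lra); lra.
- apply (continuous_ext_loc _ (fun x => Rpower x y)); [| apply continuous_Rpower, Hx].
  exists (mkposreal _ Hx); intros z Hz.
  apply ball_R_iff in Hz; simpl in Hz; rewrite Rpower0_pos; [reflexivity | lra].
Qed.

Lemma is_derive_Rpower_sqr_add c p x : 0 < c ->
  is_derive (fun x => Rpower (x ^ 2 + c) p) x (2 * x * (p * Rpower (x ^ 2 + c) (p - 1))).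
Proof.
intros Hc; apply (is_derive_comp (fun y => Rpower y p) (fun x => x ^ 2 + c)).
- apply is_derive_Reals, derivable_pt_lim_power; nra.
- auto_derive; [easy | ring].
Qed.

Lemma filterlim_Rpower_sqr_add c p : 0 < c -> p <= -1 ->
  filterlim (fun x => Rpower (x ^ 2 + c) p) (Rbar_locally p_infty) (locally 0).
Proof.
intros Hc Hp; apply (filterlim_le_le (F := Rbar_locally p_infty) (fun _ => 0) _ Rinv (Finite 0)).
- exists 1; intros x Hx; split; [apply Rlt_le, exp_pos |].
  apply Rle_trans with (Rpower (x ^ 2 + c) (- (1))).
  + apply Rle_Rpower; [nra | lra].
  + rewrite Rpower_Ropp, Rpower_1 by nra; apply Rinv_le_contravar; nra.
- apply filterlim_const.
- exact (filterlim_Rbar_inv p_infty ltac:(discriminate)).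
Qed.

Lemma half_pred_le_Rpower nu : 2 < nu -> (nu - 1) / 2 <= Rpower nu (nu / 2 - 1).
Proof.
intros Hnu; unfold Rpower; pose proof (exp_ineq1_le ((nu / 2 - 1) * ln nu)).
assert (Hln : 0 < ln nu) by (rewrite <- ln_1; apply ln_increasing; lra).
destruct (Rle_lt_dec nu 3) as [H3 | H3].
- assert (0 <= (nu / 2 - 1) * ln nu) by (apply Rmult_le_pos; lra); lra.
- assert (1 <= ln nu).
  { rewrite <- (ln_exp 1); apply ln_le; [apply exp_pos | pose proof exp_le_3; lra]. }
  assert (nu / 2 - 1 <= (nu / 2 - 1) * ln nu)
    by (rewrite <- (Rmult_1_r (nu / 2 - 1)) at 1; apply Rmult_le_compat_l; lra).
  lra.
Qed.

Definition gamma_kernel (s y : R) : R := Rpower0 y (s - 1) * exp (- y).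

Definition lower_gamma (s x : R) : R := RInt (gamma_kernel s) 0 x.

Lemma gamma_kernel_ge0 s y : 0 <= gamma_kernel s y.
Proof. apply Rmult_le_pos; [apply Rpower0_ge0 | apply Rlt_le, exp_pos]. Qed.

Section LowerGamma.

Variable s : R.
Hypothesis s_gt1 : 1 < s.

Lemma continuous_gamma_kernel y : continuous (gamma_kernel s) y.
Proof.
apply (continuous_mult (K := R_AbsRing) (fun y => Rpower0 y (s - 1)) (fun y => exp (- y))).
- apply continuous_Rpower0; lra.
- apply continuous_of_ex_derive; auto_derive; auto.
Qed.

(* [C] is the maximum of [y ^ (s - 1) * exp (- y / 2)], attained at [y = 2 (s - 1)]. *)
Let C := exp ((s - 1) * (ln (2 * (s - 1)) - 1)).

Lemma gamma_kernel_le y : gamma_kernel s y <= C * exp (- y / 2).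
Proof.
unfold gamma_kernel; destruct (Rle_dec y 0) as [Hy | Hy].
- rewrite Rpower0_nonpos, Rmult_0_l by exact Hy.
  apply Rlt_le, Rmult_lt_0_compat; apply exp_pos.
- rewrite Rpower0_pos by lra; unfold C, Rpower; rewrite <- !exp_plus.
  apply exp_le_exp; set (k := 2 * (s - 1)).
  assert (Hk : 0 < k) by (unfold k; lra).
  assert (Hz : 0 < y / k) by (apply Rdiv_lt_0_compat; lra).
  assert (Hln : ln (y / k) <= y / k - 1).
  { rewrite <- (ln_exp (y / k - 1)); apply ln_le; [exact Hz |].
    pose proof (exp_ineq1_le (y / k - 1)); lra. }
  rewrite ln_div in Hln by lra.
  apply (Rmult_le_compat_l (s - 1)) in Hln; [| lra].
  replace ((s - 1) * (y / k - 1)) with (y / 2 - (s - 1)) in Hln by (unfold k; field; lra).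
  lra.
Qed.

Lemma lower_gamma_incr x y : x <= y -> lower_gamma s x <= lower_gamma s y.
Proof.
intros Hxy; apply RInt_incr_cont; [exact Hxy | apply continuous_gamma_kernel |].
apply gamma_kernel_ge0.
Qed.

Lemma lower_gamma_le x : lower_gamma s x <= 2 * C.
Proof.
assert (HC : 0 < C) by apply exp_pos.
destruct (Rle_lt_dec 0 x) as [Hx | Hx].
- apply Rle_trans with (RInt (fun y => C * exp (- y / 2)) 0 x).
  + apply RInt_le_cont;
      [exact Hx | apply continuous_gamma_kernel | | intros; apply gamma_kernel_le].
    intros y; apply continuous_of_ex_derive; auto_derive; auto.
  + rewrite (is_RInt_unique _ 0 x (- 2 * C * exp (- x / 2) - - 2 * C * exp (- 0 / 2))).
    * replace (- 0 / 2) with 0 by field; rewrite exp_0.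
      pose proof (exp_pos (- x / 2)); nra.
    * apply (is_RInt_derive (V := R_CompleteNormedModule) (fun y => - 2 * C * exp (- y / 2)));
        intros y _; [auto_derive; [easy | unfold Rdiv; field] |].
      apply continuous_of_ex_derive; auto_derive; auto.
- apply Rle_trans with (lower_gamma s 0); [apply lower_gamma_incr; lra |].
  unfold lower_gamma; rewrite RInt_point; change (0 <= 2 * C); lra.
Qed.

Let is_RInt_gen_Gamma_integrand l :
  filterlim (lower_gamma s) (Rbar_locally p_infty) (locally l) ->
  is_RInt_gen (fun x => Rpower x (s - 1) * exp (- x)) (at_right 0) (Rbar_locally p_infty) l.
Proof.
intros Hl; apply (is_RInt_gen_ext (gamma_kernel s)).
- apply (Filter_prod _ _ _ (fun a => 0 < a) (fun b => 0 < b)).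
  + unfold at_right, within; apply filter_forall; auto.
  + hnf; exists 0; auto.
  + intros a b Ha Hb x [Hx _]; unfold gamma_kernel; rewrite Rpower0_pos; [reflexivity |].
    eapply Rlt_trans; [| exact Hx]; apply Rmin_case; assumption.
- rewrite <- (Rminus_0_r l).
  apply (is_RInt_gen_primitive _ 0 (at_right 0) (Rbar_locally p_infty));
    [apply continuous_gamma_kernel | | exact Hl].
  apply (filterlim_filter_le_1 (F := locally 0)); [apply filter_le_within |].
  replace 0 with (lower_gamma s 0) at 2 by (unfold lower_gamma; now rewrite RInt_point).
  apply continuous_of_ex_derive; eexists; apply is_derive_RInt_cont, continuous_gamma_kernel.
Qed.

Lemma filterlim_lower_gamma :
  filterlim (lower_gamma s) (Rbar_locally p_infty) (locally (Gamma s)).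
Proof.
destruct (filterlim_incr_bounded (lower_gamma s) (2 * C) lower_gamma_incr lower_gamma_le)
  as [l Hl].
replace (Gamma s) with l; [exact Hl |].
symmetry; apply is_RInt_gen_unique, is_RInt_gen_Gamma_integrand, Hl.
Qed.

Lemma lower_gamma_le_Gamma x : lower_gamma s x <= Gamma s.
Proof.
apply (filterlim_le (F := Rbar_locally p_infty) (fun _ => lower_gamma s x) (lower_gamma s)
         (lower_gamma s x) (Gamma s)).
- exists x; intros y Hy; apply lower_gamma_incr; lra.
- apply filterlim_const.
- apply filterlim_lower_gamma.
Qed.

Lemma Gamma_gt0 : 0 < Gamma s.
Proof.
apply Rlt_le_trans with (lower_gamma s 1); [| apply lower_gamma_le_Gamma].
apply RInt_gt_0; [lra | | intros; apply continuous_gamma_kernel].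
intros x Hx; unfold gamma_kernel; rewrite Rpower0_pos by lra.
apply Rmult_lt_0_compat; apply exp_pos.
Qed.

End LowerGamma.

Lemma gamma_kernel_scale s k z : 0 < k ->
  k * gamma_kernel s (k * z) = Rpower k s * (Rpower0 z (s - 1) * exp (- (k * z))).
Proof.
intros Hk; unfold gamma_kernel; destruct (Rle_lt_dec z 0) as [Hz | Hz].
- rewrite !Rpower0_nonpos by nra; ring.
- replace (Rpower k s) with (Rpower k (1 + (s - 1))) by (f_equal; ring).
  rewrite !Rpower0_pos, <- Rpower_mult_distr, Rpower_plus, Rpower_1 by nra; ring.
Qed.

(** * Student's t density *)

Definition t_kernel (nu x : R) : R := Rpower (1 + x ^ 2 / nu) (- ((nu + 1) / 2)).

Definition t_mixture (nu x y : R) : R :=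
  Rpower0 y ((nu + 1) / 2 - 1) * exp (- ((1 + x ^ 2 / nu) * y)).

Lemma t_kernel_pos nu x : 0 < t_kernel nu x.
Proof. apply exp_pos. Qed.

Lemma one_le_t_base nu x : 0 < nu -> 1 <= 1 + x ^ 2 / nu.
Proof. intros Hnu; assert (0 <= x ^ 2 / nu) by (apply Rdiv_le_0_compat; nra). lra. Qed.

Lemma continuous_t_kernel nu x : 0 < nu -> continuous (t_kernel nu) x.
Proof.
intros Hnu; apply (continuous_comp (fun x => 1 + x ^ 2 / nu) (fun y => Rpower y _)).
- apply continuous_of_ex_derive; auto_derive; auto.
- apply continuous_Rpower; pose proof (one_le_t_base nu x Hnu); lra.
Qed.

Section StudentMass.

Variable nu : R.
Hypothesis nu_gt2 : 2 < nu.

Lemma continuity_2d_pt_t_mixture x y : continuity_2d_pt (t_mixture nu) x y.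
Proof.
apply continuity_2d_pt_mult.
- apply continuity_2d_pt_of_snd, continuous_Rpower0; lra.
- apply (continuity_1d_2d_pt_comp exp (fun u v => - ((1 + u ^ 2 / nu) * v))).
  + apply derivable_continuous_pt, derivable_pt_exp.
  + apply continuity_2d_pt_opp, continuity_2d_pt_mult_sep;
      apply continuous_of_ex_derive; auto_derive; auto.
Qed.

Lemma t_mixture_ge0 x y : 0 <= t_mixture nu x y.
Proof. apply Rmult_le_pos; [apply Rpower0_ge0 | apply Rlt_le, exp_pos]. Qed.

Lemma t_kernel_mul_lower_gamma_le x Y : 0 <= Y ->
  t_kernel nu x * lower_gamma ((nu + 1) / 2) Y <= RInt (t_mixture nu x) 0 Y.
Proof.
intros HY; set (k := 1 + x ^ 2 / nu); assert (Hk : 1 <= k) by (apply one_le_t_base; lra).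
assert (E : lower_gamma ((nu + 1) / 2) Y
            = Rpower k ((nu + 1) / 2) * RInt (t_mixture nu x) 0 (Y / k)).
{ pose proof (RInt_scale (gamma_kernel ((nu + 1) / 2)) k 0 (Y / k)) as Hscale.
  rewrite Rmult_0_r in Hscale; replace (k * (Y / k)) with Y in Hscale by (field; lra).
  unfold lower_gamma; rewrite <- Hscale by (apply continuous_gamma_kernel; lra).
  rewrite <- RInt_mult_l
    by (intros; apply continuity_2d_pt_continuous_snd, continuity_2d_pt_t_mixture).
  apply RInt_ext; intros z _; rewrite gamma_kernel_scale by lra; reflexivity. }
rewrite E; unfold t_kernel; fold k; rewrite Rpower_Ropp, <- Rmult_assoc, Rinv_l, Rmult_1_l
  by apply Rgt_not_eq, exp_pos.
apply RInt_subinterval_le; try lra.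
- apply Rdiv_le_0_compat; lra.
- apply Rmult_le_reg_r with k; [lra |]; unfold Rdiv; rewrite Rmult_assoc, Rinv_l; nra.
- intros; apply continuity_2d_pt_continuous_snd, continuity_2d_pt_t_mixture.
- intros; apply t_mixture_ge0.
Qed.

Lemma RInt_t_mixture_le A B y : 0 <= y ->
  RInt (fun x => t_mixture nu x y) A B <= sqrt (nu * PI) * gamma_kernel (nu / 2) y.
Proof.
intros [Hy | <-].
- set (r := sqrt (y / nu)).
  assert (Hr : 0 < r) by (apply sqrt_lt_R0, Rdiv_lt_0_compat; lra).
  rewrite (RInt_ext _ (fun x => Rpower y ((nu + 1) / 2 - 1) * exp (- y) * exp (- (r * x) ^ 2))).
  2: { intros x _; unfold t_mixture; rewrite Rpower0_pos, Rmult_assoc, <- exp_plus by exact Hy.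
       do 2 f_equal; rewrite Rpow_mult_distr; unfold r.
       rewrite pow2_sqrt by (apply Rlt_le, Rdiv_lt_0_compat; lra); field; lra. }
  rewrite RInt_mult_l by (intros; apply continuous_of_ex_derive; auto_derive; auto).
  assert (Hpow : Rpower y ((nu + 1) / 2 - 1) = sqrt y * Rpower y (nu / 2 - 1)).
  { rewrite <- Rpower_sqrt, <- Rpower_plus by exact Hy; f_equal; field. }
  apply Rle_trans with (Rpower y ((nu + 1) / 2 - 1) * exp (- y) * (sqrt PI / r)).
  + apply Rmult_le_compat_l; [apply Rmult_le_pos; apply Rlt_le, exp_pos |].
    apply RInt_gauss_scaled_le, Hr.
  + pose proof PI_RGT_0; unfold gamma_kernel; rewrite Rpower0_pos, sqrt_mult, Hpow by lra.
    unfold r; rewrite sqrt_div_alt by lra.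
    right; field; split; apply Rgt_not_eq, sqrt_lt_R0; lra.
- rewrite (RInt_ext _ (fun _ => 0)), RInt_const.
  + unfold gamma_kernel; rewrite Rpower0_nonpos, Rmult_0_l, Rmult_0_r by lra.
    apply Req_le; change (scal (B - A) 0) with ((B - A) * 0); ring.
  + intros x _; unfold t_mixture; rewrite Rpower0_nonpos by lra; apply Rmult_0_l.
Qed.

Lemma Gamma_mul_RInt_t_kernel_le A B : A <= B ->
  Gamma ((nu + 1) / 2) * RInt (t_kernel nu) A B <= sqrt (nu * PI) * Gamma (nu / 2).
Proof.
intros HAB; set (I := RInt (t_kernel nu) A B).
assert (Hcont_x : forall Y x, continuous (fun x => RInt (t_mixture nu x) 0 Y) x)
  by (intros; apply continuous_RInt_param, continuity_2d_pt_t_mixture).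
assert (Hcont_y : forall y, continuous (fun y => RInt (fun x => t_mixture nu x y) A B) y).
{ intros; apply (continuous_RInt_param (fun y x => t_mixture nu x y)); intros.
  apply continuity_2d_pt_swap, continuity_2d_pt_t_mixture. }
assert (Hpartial : forall Y, 0 <= Y ->
          lower_gamma ((nu + 1) / 2) Y * I <= sqrt (nu * PI) * Gamma (nu / 2)).
{ intros Y HY.
  apply Rle_trans with (RInt (fun x => RInt (t_mixture nu x) 0 Y) A B).
  - unfold I; rewrite <- RInt_mult_l by (intros; apply continuous_t_kernel; lra).
    apply RInt_le_cont; [exact HAB | | apply Hcont_x |].
    + intros; apply (continuous_scal_r (V := R_NormedModule)), continuous_t_kernel; lra.
    + intros x _; rewrite Rmult_comm; apply t_kernel_mul_lower_gamma_le, HY.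
  - rewrite RInt_exchange by apply continuity_2d_pt_t_mixture.
    apply Rle_trans with (RInt (fun y => sqrt (nu * PI) * gamma_kernel (nu / 2) y) 0 Y).
    + apply RInt_le_cont; [exact HY | apply Hcont_y | |].
      * intros; apply (continuous_scal_r (V := R_NormedModule)), continuous_gamma_kernel; lra.
      * intros y Hy; apply RInt_t_mixture_le; lra.
    + rewrite RInt_mult_l by (apply continuous_gamma_kernel; lra).
      apply Rmult_le_compat_l; [apply sqrt_pos | apply lower_gamma_le_Gamma; lra]. }
apply (filterlim_le (F := Rbar_locally p_infty)
         (fun Y => lower_gamma ((nu + 1) / 2) Y * I) (fun _ => sqrt (nu * PI) * Gamma (nu / 2))
         (Gamma ((nu + 1) / 2) * I) (sqrt (nu * PI) * Gamma (nu / 2))).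
- exists 0; intros Y HY; apply Hpartial; lra.
- apply (filterlim_comp _ _ _ (lower_gamma ((nu + 1) / 2)) (fun z => scal z I) _
           (locally (Gamma ((nu + 1) / 2)))).
  + apply filterlim_lower_gamma; lra.
  + apply (filterlim_scal_l (K := R_AbsRing) (V := R_NormedModule)).
- apply filterlim_const.
Qed.

Lemma RInt_student_t_pdf_le1 A B : A <= B -> RInt (student_t_pdf nu) A B <= 1.
Proof.
intros HAB; pose proof (Gamma_mul_RInt_t_kernel_le A B HAB) as Hmass.
assert (Hden : 0 < sqrt (nu * PI) * Gamma (nu / 2)).
{ apply Rmult_lt_0_compat; [apply sqrt_lt_R0, Rmult_lt_0_compat; [lra | apply PI_RGT_0] |].
  apply Gamma_gt0; lra. }
unfold student_t_pdf; rewrite RInt_mult_l by (intros; apply continuous_t_kernel; lra).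
set (D := sqrt (nu * PI) * Gamma (nu / 2)) in *.
change (Gamma ((nu + 1) / 2) / D * RInt (t_kernel nu) A B <= 1).
apply (Rmult_le_reg_r D); [exact Hden |].
replace (Gamma ((nu + 1) / 2) / D * RInt (t_kernel nu) A B * D)
  with (Gamma ((nu + 1) / 2) * RInt (t_kernel nu) A B) by (field; lra).
lra.
Qed.

End StudentMass.

Section TKernelTail.

Variable nu : R.
Hypothesis nu_pos : 0 < nu.

Lemma t_kernel_eq x :
  t_kernel nu x = Rpower nu ((nu + 1) / 2) * Rpower (x ^ 2 + nu) (- ((nu + 1) / 2)).
Proof.
unfold t_kernel; replace (1 + x ^ 2 / nu) with ((x ^ 2 + nu) * / nu) by (field; lra).
rewrite <- Rpower_mult_distr by (try apply Rinv_0_lt_compat; nra).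
rewrite Rmult_comm; f_equal; unfold Rpower; rewrite ln_Rinv by exact nu_pos; f_equal; ring.
Qed.

Lemma RInt_t_kernel_ge t M : 0 <= t <= M ->
  Rpower nu ((nu - 1) / 2) * (Rpower (t ^ 2 + nu) (- (nu / 2)) - Rpower (M ^ 2 + nu) (- (nu / 2)))
  <= RInt (t_kernel nu) t M.
Proof.
intros [Ht HtM].
set (W := fun x => - Rpower nu ((nu - 1) / 2) * Rpower (x ^ 2 + nu) (- (nu / 2))).
set (w := fun x => t_kernel nu x * (x / sqrt (x ^ 2 + nu))).
assert (Hw_cont : forall x, continuous w x).
{ intros x; apply (continuous_mult (K := R_AbsRing)); [apply continuous_t_kernel, nu_pos |].
  apply continuous_of_ex_derive; auto_derive; repeat split;
    [nra | apply Rgt_not_eq, sqrt_lt_R0; nra]. }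
assert (HW : forall x, is_derive W x (w x)).
{ intros x; set (y := x ^ 2 + nu); assert (Hy : 0 < y) by (unfold y; nra).
  assert (Hnu_pow : Rpower nu ((nu - 1) / 2) * nu = Rpower nu ((nu + 1) / 2)).
  { replace ((nu + 1) / 2) with ((nu - 1) / 2 + 1) by field.
    now rewrite Rpower_plus, Rpower_1. }
  assert (Hy_pow : Rpower y (- (nu / 2) - 1) = Rpower y (- ((nu + 1) / 2)) * / sqrt y).
  { rewrite <- Rpower_sqrt, <- Rpower_Ropp, <- Rpower_plus by exact Hy; f_equal; field. }
  replace (w x)
    with (- Rpower nu ((nu - 1) / 2) * (2 * x * (- (nu / 2) * Rpower y (- (nu / 2) - 1)))).
  - apply (is_derive_scal (fun x => Rpower (x ^ 2 + nu) (- (nu / 2)))).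
    apply is_derive_Rpower_sqr_add, nu_pos.
  - unfold w; rewrite t_kernel_eq, Hy_pow, <- Hnu_pow; fold y.
    field; apply Rgt_not_eq, sqrt_lt_R0, Hy. }
assert (Hw_le : forall x, 0 <= x -> w x <= t_kernel nu x).
{ intros x Hx; unfold w; rewrite <- (Rmult_1_r (t_kernel nu x)) at 2.
  apply Rmult_le_compat_l; [apply Rlt_le, exp_pos |].
  assert (Hs : x <= sqrt (x ^ 2 + nu))
    by (rewrite <- (sqrt_pow2 x Hx) at 1; apply sqrt_le_1_alt; lra).
  assert (0 < sqrt (x ^ 2 + nu)) by (apply sqrt_lt_R0; nra).
  apply Rmult_le_reg_r with (sqrt (x ^ 2 + nu)); [lra |].
  unfold Rdiv; rewrite Rmult_assoc, Rinv_l; lra. }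
replace (Rpower nu ((nu - 1) / 2) * (Rpower (t ^ 2 + nu) (- (nu / 2))
           - Rpower (M ^ 2 + nu) (- (nu / 2)))) with (W M - W t) by (unfold W; ring).
rewrite <- (is_RInt_unique w t M (W M - W t))
  by (apply (is_RInt_derive (V := R_CompleteNormedModule)); intros; [apply HW | apply Hw_cont]).
apply RInt_le_cont; [exact HtM | exact Hw_cont | | intros x Hx; apply Hw_le; lra].
intros; apply continuous_t_kernel, nu_pos.
Qed.

End TKernelTail.

Section StudentCdf.

Variable nu : R.
Hypothesis nu_gt2 : 2 < nu.

Let t_const := Gamma ((nu + 1) / 2) / (sqrt (nu * PI) * Gamma (nu / 2)).

Let t_const_pos : 0 < t_const.
Proof.
apply Rdiv_lt_0_compat; [apply Gamma_gt0; lra |].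
apply Rmult_lt_0_compat; [apply sqrt_lt_R0, Rmult_lt_0_compat; [lra | apply PI_RGT_0] |].
apply Gamma_gt0; lra.
Qed.

Let continuous_pdf x : continuous (student_t_pdf nu) x.
Proof.
apply (continuous_scal_r (V := R_NormedModule) t_const (t_kernel nu)).
apply continuous_t_kernel; lra.
Qed.

Let pdf_ge0 x : 0 <= student_t_pdf nu x.
Proof. apply Rmult_le_pos; [apply Rlt_le, t_const_pos | apply Rlt_le, t_kernel_pos]. Qed.

Lemma student_t_cdf_add_RInt_le1 t M : t <= M ->
  student_t_cdf nu t + RInt (student_t_pdf nu) t M <= 1.
Proof.
intros HtM.
destruct (filterlim_incr_bounded_m_infty (fun a => RInt (student_t_pdf nu) t a) (- 1)) as [l Hl].
- intros a b Hab; apply RInt_incr_cont; auto.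
- intros a; destruct (Rle_lt_dec a t) as [Hat | Hta].
  + pose proof (RInt_Chasles_cont (student_t_pdf nu) t a t continuous_pdf) as Hchasles.
    rewrite RInt_point in Hchasles.
    change (RInt (student_t_pdf nu) t a + RInt (student_t_pdf nu) a t = 0) in Hchasles.
    pose proof (RInt_student_t_pdf_le1 nu nu_gt2 a t Hat); lra.
  + pose proof (RInt_ge0_cont (student_t_pdf nu) t a (Rlt_le _ _ Hta) continuous_pdf
                  (fun x _ => pdf_ge0 x)); lra.
- assert (HF : student_t_cdf nu t = - l).
  { unfold student_t_cdf; apply is_RInt_gen_unique; rewrite <- Rminus_0_l.
    apply (is_RInt_gen_primitive _ t (Rbar_locally m_infty) (at_point t));
      [exact continuous_pdf | exact Hl |].
    intros P HP; unfold filtermap, at_point; rewrite RInt_point; exact (locally_singleton _ _ HP). }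
  assert (Hl_ge : RInt (student_t_pdf nu) t M - 1 <= l).
  { apply (filterlim_le (F := Rbar_locally m_infty) (fun _ => RInt (student_t_pdf nu) t M - 1)
             (fun a => RInt (student_t_pdf nu) t a) (RInt (student_t_pdf nu) t M - 1) l).
    - exists t; intros a Ha.
      pose proof (RInt_Chasles_cont (student_t_pdf nu) t a M continuous_pdf).
      pose proof (RInt_student_t_pdf_le1 nu nu_gt2 a M ltac:(lra)); lra.
    - apply filterlim_const.
    - exact Hl. }
  rewrite HF; lra.
Qed.

Lemma student_t_survival_ge t : 0 <= t ->
  t_const * Rpower nu ((nu - 1) / 2) * Rpower (t ^ 2 + nu) (- (nu / 2)) <= 1 - student_t_cdf nu t.
Proof.
intros Ht; set (K := Rpower nu ((nu - 1) / 2)); set (a := Rpower (t ^ 2 + nu) (- (nu / 2))).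
apply (filterlim_le (F := Rbar_locally p_infty)
         (fun M => t_const * (K * (a - Rpower (M ^ 2 + nu) (- (nu / 2)))))
         (fun _ => 1 - student_t_cdf nu t) (t_const * K * a) (1 - student_t_cdf nu t)).
- exists t; intros M HM.
  pose proof (student_t_cdf_add_RInt_le1 t M (Rlt_le _ _ HM)).
  assert (t_const * (K * (a - Rpower (M ^ 2 + nu) (- (nu / 2)))) <= RInt (student_t_pdf nu) t M).
  { unfold student_t_pdf; rewrite RInt_mult_l by (intros; apply continuous_t_kernel; lra).
    apply Rmult_le_compat_l; [apply Rlt_le, t_const_pos | apply RInt_t_kernel_ge; lra]. }
  lra.
- replace (t_const * K * a) with (t_const * (K * (a - 0))) by ring.
  apply (filterlim_comp _ _ _ (fun M => Rpower (M ^ 2 + nu) (- (nu / 2)))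
           (fun z => t_const * (K * (a - z))) _ (locally 0)).
  + apply filterlim_Rpower_sqr_add; lra.
  + apply continuous_of_ex_derive; auto_derive; auto.
- apply filterlim_const.
Qed.

End StudentCdf.

Lemma kappa_le_student_t_const nu : 2 < nu ->
  Gamma ((nu + 1) / 2) * (nu - 1) / (2 * sqrt PI * Gamma (nu / 2))
  <= Gamma ((nu + 1) / 2) / (sqrt (nu * PI) * Gamma (nu / 2)) * Rpower nu ((nu - 1) / 2).
Proof.
intros Hnu; pose proof PI_RGT_0.
assert (Hsnu : 0 < sqrt nu) by (apply sqrt_lt_R0; lra).
assert (HsPI : 0 < sqrt PI) by (apply sqrt_lt_R0; lra).
assert (Hc : 0 < Gamma ((nu + 1) / 2) / (sqrt PI * Gamma (nu / 2))).
{ apply Rdiv_lt_0_compat; [| apply Rmult_lt_0_compat; [exact HsPI |]]; apply Gamma_gt0; lra. }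
assert (Hpow : Rpower nu ((nu - 1) / 2) = sqrt nu * Rpower nu (nu / 2 - 1)).
{ rewrite <- Rpower_sqrt, <- Rpower_plus by lra; f_equal; field. }
rewrite Hpow, sqrt_mult by lra.
replace (Gamma ((nu + 1) / 2) * (nu - 1) / (2 * sqrt PI * Gamma (nu / 2)))
  with (Gamma ((nu + 1) / 2) / (sqrt PI * Gamma (nu / 2)) * ((nu - 1) / 2))
  by (field; split; [apply Rgt_not_eq, Gamma_gt0 | ]; lra).
replace (Gamma ((nu + 1) / 2) / (sqrt nu * sqrt PI * Gamma (nu / 2))
         * (sqrt nu * Rpower nu (nu / 2 - 1)))
  with (Gamma ((nu + 1) / 2) / (sqrt PI * Gamma (nu / 2)) * Rpower nu (nu / 2 - 1))
  by (field; repeat split; [apply Rgt_not_eq, Gamma_gt0 | | ]; lra).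
apply Rmult_le_compat_l; [lra | apply half_pred_le_Rpower, Hnu].
Qed.

Theorem corollary3 (nu t : R) (hnu : 2 < nu) (ht : 0 < t) :
  1 / (1 - student_t_cdf nu t)
  <= Rpower (t ^ 2 + nu) (nu / 2)
     / (Gamma ((nu + 1) / 2) * (nu - 1) / (2 * sqrt PI * Gamma (nu / 2))).
Proof.
set (kappa := Gamma ((nu + 1) / 2) * (nu - 1) / (2 * sqrt PI * Gamma (nu / 2))).
set (A := Rpower (t ^ 2 + nu) (nu / 2)).
assert (HA : 0 < A) by apply exp_pos.
assert (Hkappa : 0 < kappa).
{ assert (0 < Gamma ((nu + 1) / 2)) by (apply Gamma_gt0; lra).
  assert (0 < Gamma (nu / 2)) by (apply Gamma_gt0; lra).
  pose proof (sqrt_lt_R0 PI PI_RGT_0).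
  apply Rdiv_lt_0_compat; repeat apply Rmult_lt_0_compat; lra. }
assert (Hsurv : kappa / A <= 1 - student_t_cdf nu t).
{ eapply Rle_trans; [| apply student_t_survival_ge; lra].
  unfold Rdiv at 1; unfold A; rewrite <- Rpower_Ropp.
  apply Rmult_le_compat_r; [apply Rlt_le, exp_pos | apply kappa_le_student_t_const, hnu]. }
replace (A / kappa) with (/ (kappa / A)) by (field; lra).
unfold Rdiv at 1; rewrite Rmult_1_l.
apply Rinv_le_contravar; [apply Rdiv_lt_0_compat |]; assumption.
Qed.
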